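(* Define rooted trees $(S_\alpha,r_\alpha)$ for all ordinals $\alpha\ge 1$ by transfinite recursion: $S_1$ is a single vertex $r_1$; for $\alpha>1$, $S_\alpha$ is obtained from pairwise disjoint copies of the rooted trees $(S_i,r_i)$, $1\le i<\alpha$, by adding a new vertex $r_\alpha$ (the root of $S_\alpha$) joined by an edge to each $r_i$, $1\le i<\alpha$. Then for every ordinal $\alpha$ (including $\alpha=0$), the tree $S_{\alpha+1}$ is cop-win and $\eta(S_{\alpha+1})=\alpha$.
   Context: All graphs are simple and undirected, possibly infinite. For a vertex $v$ of a graph $G$, $N[v]$ denotes its closed neighbourhood. Define binary relations $\leq_\alpha$ on $V(G)$, for every ordinal $\alpha$, by transfinite recursion: $u\leq_0 v$ iff $u=v$; for $\alpha>0$, $u\leq_\alpha v$ iff for every $x\in N[u]$ there exist $y\in N[v]$ and an ordinal $\beta<\alpha$ with $x\leq_\beta y$. For $v\in V(G)$, $\eta(v)$ denotes the least ordinal $\alpha$ such that $u\leq_\alpha v$ for all $u\in V(G)$ (when such $\alpha$ exists), and $\eta(G)=\min_{v\in V(G)}\eta(v)$. A graph is cop-win if in the game of Cops and Robbers a single cop has a strategy guaranteeing capture of the robber (a tree is cop-win iff it contains no ray). *)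

From Stdlib Require Import List.
Import ListNotations.


Record graph := Graph {
  vtx :> Type;
  adj : vtx -> vtx -> Prop;
  adj_sym : forall x y, adj x y -> adj y x;
  adj_irrefl : forall x, ~ adj x x
}.

Definition cnbh (G : graph) (v x : G) : Prop := x = v \/ adj G v x.

(* Ordinals are represented as elements of a well-ordered type
   (W, lt): lt is well-founded, transitive and trichotomous.  The ordinal
   of w : W is the order type of {x | lt x w}. *)
Definition well_order {W : Type} (lt : W -> W -> Prop) : Prop :=
  well_founded lt /\
  (forall x y z, lt x y -> lt y z -> lt x z) /\
  (forall x y, lt x y \/ x = y \/ lt y x).

Definition is_zero {W : Type} (lt : W -> W -> Prop) (w : W) : Prop :=
  forall z, ~ lt z w.

(* leo lt G b u v  means  u <=_b v.  This inductive predicate is the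
   (unique) solution of the transfinite recursion:
     u <=_0 v  iff u = v;
     for b > 0: u <=_b v iff for all x in N[u] there are y in N[v] and
                c < b with x <=_c y. *)
Inductive leo {W : Type} (lt : W -> W -> Prop) (G : graph) : W -> G -> G -> Prop :=
| leo_zero : forall b u, is_zero lt b -> leo lt G b u u
| leo_succ : forall b u v, ~ is_zero lt b ->
    (forall x, cnbh G u x ->
       exists y, cnbh G v y /\ exists c, lt c b /\ leo lt G c x y) ->
    leo lt G b u v.

Definition eta_vtx {W : Type} (lt : W -> W -> Prop) (G : graph) (v : G) (b : W) : Prop :=
  (forall u, leo lt G b u v) /\
  (forall c, lt c b -> ~ (forall u, leo lt G c u v)).

Definition eta_graph {W : Type} (lt : W -> W -> Prop) (G : graph) (b : W) : Prop :=
  (exists v, eta_vtx lt G v b) /\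
  (forall v c, eta_vtx lt G v c -> ~ lt c b).

Definition lazy_walk (G : graph) (r : nat -> G) : Prop :=
  forall n, cnbh G (r n) (r (S n)).

(* A cop strategy: a starting vertex c0 and a move function depending on
   the whole history r_0, ..., r_n of robber positions. *)
Definition cop_pos (G : graph) (c0 : G) (f : list G -> G) (r : nat -> G) (n : nat) : G :=
  match n with
  | O => c0
  | S m => f (map r (seq 0 (S m)))
  end.

(* Round n: cop at c_n, robber at r_n; cop moves to c_{n+1} in N[c_n]
   (capture if c_{n+1} = r_n), then robber moves to r_{n+1} in N[r_n]
   (capture if r_{n+1} = c_{n+1}).  The robber chooses r_0 after seeing c_0
   and may react to everything; since the cop strategy is deterministic,
   quantifying over all robber walks covers all robber strategies. *)
Definition cop_win (G : graph) : Prop :=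
  exists (c0 : G) (f : list G -> G),
    forall r : nat -> G, lazy_walk G r ->
      (forall n, cnbh G (cop_pos G c0 f r n) (cop_pos G c0 f r (S n))) /\
      (exists n, cop_pos G c0 f r n = r n \/ cop_pos G c0 f r (S n) = r n).

(* Unrolling the recursive disjoint-union construction: a vertex of
   S_beta (beta >= 1) is a finite strictly decreasing sequence
   i_1 > i_2 > ... > i_k of ordinals with i_1 < beta and i_k >= 1;
   the root r_beta is the empty sequence, r_i (i < beta) is [i], and the
   vertices [i; ...] form the copy of S_i.
   For S_{alpha+1} the condition i_1 < alpha+1 reads i_1 <= alpha. *)
Fixpoint decr {W : Type} (lt : W -> W -> Prop) (l : list W) : Prop :=
  match l with
  | [] => True
  | x :: l' => match l' with
               | [] => True
               | y :: _ => lt y x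
               end /\ decr lt l'
  end.

Definition S_vertex {W : Type} (lt : W -> W -> Prop) (alpha : W) (l : list W) : Prop :=
  decr lt l /\
  (forall w, In w l -> ~ is_zero lt w) /\
  (forall w, In w l -> lt w alpha \/ w = alpha).

Definition S_type {W : Type} (lt : W -> W -> Prop) (alpha : W) : Type :=
  { l : list W | S_vertex lt alpha l }.

Definition S_adj {W : Type} (lt : W -> W -> Prop) (alpha : W)
  (u v : S_type lt alpha) : Prop :=
  (exists w, proj1_sig v = proj1_sig u ++ [w]) \/
  (exists w, proj1_sig u = proj1_sig v ++ [w]).

Lemma S_adj_sym {W : Type} (lt : W -> W -> Prop) (alpha : W) :
  forall u v, S_adj lt alpha u v -> S_adj lt alpha v u.
Proof. intros u v [H|H]; [right|left]; exact H. Qed.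

Lemma S_adj_irrefl {W : Type} (lt : W -> W -> Prop) (alpha : W) :
  forall u, ~ S_adj lt alpha u u.
Proof.
  intros u [[w H]|[w H]];
  apply (f_equal (@length W)) in H; rewrite length_app in H; simpl in H;
  rewrite PeanoNat.Nat.add_1_r in H; exact (PeanoNat.Nat.neq_succ_diag_l _ (eq_sym H)).
Qed.

Definition S_succ {W : Type} (lt : W -> W -> Prop) (alpha : W) : graph :=
  @Graph (S_type lt alpha) (S_adj lt alpha) (@S_adj_sym W lt alpha)
         (@S_adj_irrefl W lt alpha).

From Stdlib Require Import List Classical ClassicalEpsilon ProofIrrelevance.
Import ListNotations.

(* A vertex u in the branch of v through its child v++[j] satisfies u <=_j v,
   by induction on j: a neighbour of u either is v, a neighbour of v, or lies in
   the branch of v++[j] through a child v++[j;k] with k < j.  Since every label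
   is at most alpha, the root has eta = alpha.  Conversely, a vertex x = p++[k]
   can answer any level c < k by moving into its child x++[c], so x is not
   dominated below level k by any vertex outside its own subtree; applying this
   to [alpha], or to the child [c] of the root when v lies below [alpha], shows
   that no vertex has eta < alpha.  For cop-win, the cop starts at the root and
   always steps towards the robber: the robber never leaves the cop's subtree,
   so the labels the cop appends form a strictly decreasing sequence, which is
   impossible in a well-order. *)

Definition prefix {A : Type} (p l : list A) : Prop := exists s, l = p ++ s.

Lemma cnbh_sym (G : graph) (u v : G) : cnbh G u v -> cnbh G v u.
Proof. intros [->|H]; [left|right; apply adj_sym]; auto. Qed.

Section WellOrders.

Variables (W : Type) (lt : W -> W -> Prop).

Lemma decr_app_l (l1 l2 : list W) : decr lt (l1 ++ l2) -> decr lt l1.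
Proof.
  induction l1 as [|a [|b l1] IH]; simpl; try tauto.
  intros [Hab Hd]. split; [exact Hab|apply IH, Hd].
Qed.

Lemma decr_app_cons2 (l : list W) j k t : decr lt (l ++ j :: k :: t) -> lt k j.
Proof. induction l as [|a l IH]; simpl; [intros [H _]|intros [_ H]]; auto. Qed.

Lemma decr_snoc (l : list W) k c : decr lt (l ++ [k]) -> lt c k -> decr lt (l ++ [k; c]).
Proof.
  induction l as [|a [|b l] IH]; simpl; try tauto.
  intros [Hab Hd] Hc. split; [exact Hab|apply IH; assumption].
Qed.

Lemma wf_irrefl : well_founded lt -> forall x, ~ lt x x.
Proof. intros wf x. induction (wf x) as [x _ IH]. intro H. exact (IH x H H). Qed.

Lemma no_descending_chain :
  well_founded lt -> forall a : nat -> W, ~ (forall n, lt (a (S n)) (a n)).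
Proof.
  intros wf a Ha.
  enough (H : forall x n, a n <> x) by exact (H (a 0) 0 eq_refl).
  intro x. induction (wf x) as [x _ IH]. intros n <-.
  exact (IH (a (S n)) (Ha n) (S n) eq_refl).
Qed.

Hypothesis Hwo : well_order lt.

Lemma exists_zero_below w : ~ is_zero lt w -> exists z, is_zero lt z /\ lt z w.
Proof.
  destruct Hwo as [wf [tr _]]. induction (wf w) as [w _ IH]. intro Hw.
  apply not_all_not_ex in Hw as [z0 Hz0].
  destruct (classic (is_zero lt z0)) as [Hz|Hz]; [eauto|].
  destruct (IH z0 Hz0 Hz) as [z [Hz' Hzz0]]. eauto.
Qed.

Variable G : graph.

Lemma leo_refl b (u : G) : leo lt G b u u.
Proof.
  destruct (classic (is_zero lt b)) as [Hz|Hz]; [now apply leo_zero|].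
  apply leo_succ; [exact Hz|]. intros x Hx.
  destruct (exists_zero_below b Hz) as [z [Hz0 Hzb]].
  exists x. split; [exact Hx|]. exists z. split; [exact Hzb|now apply leo_zero].
Qed.

Lemma leo_mono b b' (u v : G) : leo lt G b u v -> lt b b' -> leo lt G b' u v.
Proof.
  destruct Hwo as [_ [tr _]]. intros Hl Hbb.
  destruct Hl as [b u _|b u v _ Hs]; [apply leo_refl|].
  apply leo_succ; [intro Hz; exact (Hz b Hbb)|]. intros x Hx.
  destruct (Hs x Hx) as [y [Hy [c [Hc Hl]]]]. eauto 6.
Qed.

Lemma leo_inv b (u v : G) :
  leo lt G b u v ->
  u = v \/
  (~ is_zero lt b /\
   forall x, cnbh G u x -> exists y, cnbh G v y /\ exists c, lt c b /\ leo lt G c x y).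
Proof. intros [|]; auto. Qed.

End WellOrders.

Section Tree.

Variables (W : Type) (lt : W -> W -> Prop) (alpha : W).
Hypothesis Hwo : well_order lt.

Local Notation T := (S_succ lt alpha).

Lemma S_vertex_eq (u v : T) : proj1_sig u = proj1_sig v -> u = v.
Proof. destruct u, v. simpl. apply subset_eq_compat. Qed.

Lemma S_vertex_app_l l1 l2 : S_vertex lt alpha (l1 ++ l2) -> S_vertex lt alpha l1.
Proof.
  intros [Hd [Hn Hl]]. split; [eapply decr_app_l; eauto|].
  split; intros w Hw; [apply Hn|apply Hl]; apply in_or_app; auto.
Qed.

Lemma S_vertex_snoc l k c :
  S_vertex lt alpha (l ++ [k]) -> lt c k -> ~ is_zero lt c -> S_vertex lt alpha (l ++ [k; c]).
Proof.
  destruct Hwo as [_ [tr _]]. intros [Hd [Hn Hl]] Hck Hc.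
  assert (Hk : lt k alpha \/ k = alpha) by (apply Hl, in_or_app; simpl; auto).
  split; [now apply decr_snoc|].
  replace (l ++ [k; c]) with ((l ++ [k]) ++ [c]) by (rewrite <- app_assoc; reflexivity).
  split; intros w Hw; apply in_app_or in Hw as [Hw|[<-|[]]]; auto.
  destruct Hk as [Hk| ->]; eauto.
Qed.

Lemma S_vertex_singleton w :
  ~ is_zero lt w -> lt w alpha \/ w = alpha -> S_vertex lt alpha [w].
Proof. intros Hz Hw. split; [exact (conj I I)|]. split; intros x [<-|[]]; auto. Qed.

Definition root : T :=
  exist _ [] (conj I (conj (fun _ H => False_ind _ H) (fun _ H => False_ind _ H))).

Lemma cnbh_branch (u x : T) p a t :
  cnbh T u x -> proj1_sig u = p ++ a :: t ->
  proj1_sig x = p \/ exists t', proj1_sig x = p ++ a :: t'.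
Proof.
  intros [->|[[w Hw]|[w Hw]]] Hu.
  - right. eauto.
  - right. exists (t ++ [w]). rewrite Hw, Hu, <- app_assoc. reflexivity.
  - rewrite Hu in Hw. destruct t as [|b t] using rev_ind.
    + left. symmetry. apply (app_inj_tail _ _ _ _ Hw).
    + right. exists t. rewrite app_comm_cons, app_assoc in Hw.
      symmetry. apply (app_inj_tail _ _ _ _ Hw).
Qed.

Lemma cnbh_prefix (u x : T) p a t :
  cnbh T u x -> proj1_sig u = p ++ a :: t -> prefix p (proj1_sig x).
Proof.
  intros Hx Hu. destruct (cnbh_branch u x p a t Hx Hu) as [->|[t' ->]].
  - exists []. now rewrite app_nil_r.
  - now exists (a :: t').
Qed.

Lemma leo_descendant j (v u : T) t : proj1_sig u = proj1_sig v ++ j :: t -> leo lt T j u v.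
Proof.
  destruct Hwo as [wf _]. revert v u t. induction (wf j) as [j _ IH]. intros v u t Hu.
  assert (Hj : ~ is_zero lt j).
  { apply (proj1 (proj2 (proj2_sig u))). rewrite Hu. apply in_or_app. simpl. auto. }
  destruct (exists_zero_below W lt Hwo j Hj) as [z [_ Hzj]].
  apply leo_succ; [exact Hj|]. intros x Hx.
  destruct (cnbh_branch u x _ _ _ Hx Hu) as [Hxv|[[|k s] Hxs]].
  - exists v. split; [now left|]. exists z. split; [exact Hzj|].
    rewrite (S_vertex_eq x v Hxv). apply leo_refl, Hwo.
  - exists x. split; [right; left; now exists j|].
    exists z. split; [exact Hzj|apply leo_refl, Hwo].
  - assert (Hkj : lt k j).
    { pose proof (proj1 (proj2_sig x)) as Hd. rewrite Hxs in Hd.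
      exact (decr_app_cons2 W lt _ j k s Hd). }
    assert (Hy : S_vertex lt alpha (proj1_sig v ++ [j])).
    { apply (S_vertex_app_l _ (k :: s)). rewrite <- app_assoc. simpl. rewrite <- Hxs.
      apply (proj2_sig x). }
    exists (exist _ _ Hy). split; [right; left; now exists j|].
    exists k. split; [exact Hkj|]. apply (IH k Hkj _ _ s). simpl. now rewrite <- app_assoc.
Qed.

Lemma not_leo_outside k (x y : T) p :
  proj1_sig x = p ++ [k] -> ~ prefix (proj1_sig x) (proj1_sig y) ->
  forall c, lt c k -> ~ leo lt T c x y.
Proof.
  destruct Hwo as [wf _]. revert x y p. induction (wf k) as [k _ IH].
  intros x y p Hx Hny c Hck Hl.
  destruct (leo_inv W lt T c x y Hl) as [<-|[Hc Hstep]].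
  { apply Hny. exists []. now rewrite app_nil_r. }
  assert (Hxc : S_vertex lt alpha (proj1_sig x ++ [c])).
  { rewrite Hx, <- app_assoc.
    apply S_vertex_snoc; [rewrite <- Hx; apply (proj2_sig x)|assumption..]. }
  destruct (Hstep (exist _ _ Hxc)) as [y' [Hy' [c' [Hc' Hl']]]].
  { right; left; now exists c. }
  refine (IH c Hck (exist _ _ Hxc) y' (proj1_sig x) eq_refl _ c' Hc' Hl').
  intros [s Hs]. apply Hny. simpl in Hs. rewrite <- app_assoc in Hs.
  exact (cnbh_prefix y' y _ c s (cnbh_sym T y y' Hy') Hs).
Qed.

Lemma leo_root u : leo lt T alpha u root.
Proof.
  destruct (proj1_sig u) as [|j t] eqn:E.
  - rewrite (S_vertex_eq u root E). apply leo_refl, Hwo.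
  - assert (Hj : lt j alpha \/ j = alpha)
      by (apply (proj2 (proj2 (proj2_sig u))); rewrite E; now left).
    pose proof (leo_descendant j root u t E) as H.
    destruct Hj as [Hj| ->]; [exact (leo_mono W lt Hwo T _ _ u root H Hj)|exact H].
Qed.

Lemma not_leo_below_alpha (v : T) c : lt c alpha -> ~ forall u, leo lt T c u v.
Proof.
  intros Hc H.
  assert (Ha : ~ is_zero lt alpha) by (intro Hz; exact (Hz c Hc)).
  destruct (classic (prefix [alpha] (proj1_sig v))) as [[s Hs]|Hn].
  - destruct (leo_inv W lt T c root v (H root)) as [E|[Hcz Hstep]].
    { rewrite <- E in Hs. discriminate. }
    pose (x := exist (S_vertex lt alpha) [c] (S_vertex_singleton c Hcz (or_introl Hc)) : T).
    destruct (Hstep x) as [y [Hy [c' [Hc' Hl]]]]; [right; left; now exists c|].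
    refine (not_leo_outside c x y [] eq_refl _ c' Hc' Hl).
    intros [s' Hs']. simpl in Hs'.
    destruct (cnbh_branch v y [] alpha s Hy Hs) as [Ey|[t' Ey]]; rewrite Ey in Hs';
      [discriminate|].
    injection Hs' as E. apply (wf_irrefl W lt (proj1 Hwo) c). rewrite <- E at 2. exact Hc.
  - pose (x := exist (S_vertex lt alpha) [alpha]
                (S_vertex_singleton alpha Ha (or_intror eq_refl)) : T).
    exact (not_leo_outside alpha x v [] eq_refl Hn c Hc (H x)).
Qed.

Lemma eta_vtx_root : eta_vtx lt T root alpha.
Proof. split; [exact leo_root|intros c Hc; exact (not_leo_below_alpha root c Hc)]. Qed.

Definition chase_step (c r y : T) : Prop :=
  (exists w s, proj1_sig r = proj1_sig c ++ w :: s /\ proj1_sig y = proj1_sig c ++ [w]) \/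
  ((~ exists w s, proj1_sig r = proj1_sig c ++ w :: s) /\ y = c).

Definition chase (c r : T) : T := epsilon (inhabits c) (chase_step c r).

Lemma chase_correct (c r : T) : chase_step c r (chase c r).
Proof.
  unfold chase. apply epsilon_spec.
  destruct (classic (exists w s, proj1_sig r = proj1_sig c ++ w :: s)) as [[w [s Hs]]|Hn].
  - assert (Hv : S_vertex lt alpha (proj1_sig c ++ [w])).
    { apply (S_vertex_app_l _ s). rewrite <- app_assoc. simpl. rewrite <- Hs.
      apply (proj2_sig r). }
    exists (exist _ _ Hv). left. eauto.
  - exists c. right. auto.
Qed.

Lemma chase_cnbh (c r : T) : cnbh T c (chase c r).
Proof.
  destruct (chase_correct c r) as [[w [s [_ H]]]|[_ H]]; [right; left; now exists w|now left].
Qed.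

Lemma chase_round (c r r' : T) :
  prefix (proj1_sig c) (proj1_sig r) -> c <> r -> chase c r <> r -> cnbh T r r' ->
  prefix (proj1_sig (chase c r)) (proj1_sig r') /\
  exists w, proj1_sig (chase c r) = proj1_sig c ++ [w].
Proof.
  intros [[|w s] Hs] Hcr Hchr Hr'.
  { rewrite app_nil_r in Hs. now destruct (Hcr (S_vertex_eq c r (eq_sym Hs))). }
  destruct (chase_correct c r) as [[w' [s' [Hr Hch]]]|[Hn _]]; [|now destruct Hn; eauto].
  split; [|eauto].
  assert (Hr2 : proj1_sig r = proj1_sig (chase c r) ++ s')
    by (rewrite Hr, Hch, <- app_assoc; reflexivity).
  destruct s' as [|a s''].
  - rewrite app_nil_r in Hr2. now destruct (Hchr (S_vertex_eq _ _ (eq_sym Hr2))).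
  - exact (cnbh_prefix r r' _ a s'' Hr' Hr2).
Qed.

Definition chaser (h : list T) : T := fold_left chase h root.

Lemma cop_pos_chaser (r : nat -> T) n :
  cop_pos T root chaser r (S n) = chase (cop_pos T root chaser r n) (r n).
Proof.
  destruct n as [|m]; [reflexivity|].
  unfold cop_pos, chaser. rewrite (seq_S (S m) 0), map_app, fold_left_app. reflexivity.
Qed.

Lemma S_succ_cop_win : cop_win T.
Proof.
  exists root, chaser. intros r Hr.
  set (c := cop_pos T root chaser r).
  assert (Hc : forall n, c (S n) = chase (c n) (r n)) by (intro n; apply cop_pos_chaser).
  split; [intro n; rewrite Hc; apply chase_cnbh|].
  apply NNPP. intro Hno.
  assert (Hround : forall n, prefix (proj1_sig (c n)) (proj1_sig (r n)) ->
            prefix (proj1_sig (c (S n))) (proj1_sig (r (S n))) /\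
            exists w, proj1_sig (c (S n)) = proj1_sig (c n) ++ [w]).
  { intros n Hn. rewrite Hc. apply chase_round; [exact Hn| | |apply Hr];
      intro E; apply Hno; exists n; [left|right; rewrite Hc]; exact E. }
  assert (Hbelow : forall n, prefix (proj1_sig (c n)) (proj1_sig (r n))).
  { induction n as [|n IH]; [now exists (proj1_sig (r 0))|exact (proj1 (Hround n IH))]. }
  set (a := fun n => last (proj1_sig (c (S n))) alpha).
  assert (Ha : forall n, proj1_sig (c (S n)) = proj1_sig (c n) ++ [a n]).
  { intro n. destruct (proj2 (Hround n (Hbelow n))) as [w Hw].
    rewrite Hw. unfold a. rewrite Hw, last_last. reflexivity. }
  apply (no_descending_chain W lt (proj1 Hwo) a). intro n.
  apply (decr_app_cons2 W lt (proj1_sig (c n)) _ _ []).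
  change [a n; a (S n)] with ([a n] ++ [a (S n)]). rewrite app_assoc, <- Ha, <- Ha.
  apply (proj2_sig (c (S (S n)))).
Qed.

End Tree.

Theorem lemma3p4 (W : Type) (lt : W -> W -> Prop) (alpha : W) :
  well_order lt ->
  cop_win (S_succ lt alpha) /\ eta_graph lt (S_succ lt alpha) alpha.
Proof.
  intro Hwo. split; [exact (S_succ_cop_win W lt alpha Hwo)|]. split.
  - exists (root W lt alpha). exact (eta_vtx_root W lt alpha Hwo).
  - intros v c [Hv _] Hc. exact (not_leo_below_alpha W lt alpha Hwo v c Hc Hv).
Qed.
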